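(* The map $(m,n)\mapsto d_{m,n}$ is a metric on $\overline{\mathbb{N}}=\mathbb{N}\cup\{-1\}$.
   Context: Let $\mathbb{N}=\{0,1,2,\dots\}$. Fix a sequence $(\pi^n)_{n\in\mathbb{N}}$ where each $\pi^n=(\pi^n_i)_{i\in\mathbb{N}}$ is a probability distribution on $\mathbb{N}$ with support contained in $\{0,\dots,n\}$, and $\pi^n\ne\pi^m$ for $m\ne n$. Define reals $d_{m,n}$ for $m,n\in\mathbb{N}\cup\{-1\}$ recursively as follows: $d_{-1,-1}=0$, $d_{-1,j}=d_{j,-1}=1$ for $j\in\mathbb{N}$, and for $m,n\in\mathbb{N}$, $$d_{m,n}=\min_{z\in\mathcal{F}_{m,n}}\sum_{i=0}^m\sum_{j=0}^n z_{i,j}\,d_{i-1,j-1},$$ where $\mathcal{F}_{m,n}$ is the set of transport plans from $\pi^m$ to $\pi^n$, i.e. arrays $z=(z_{i,j})_{0\le i\le m,\,0\le j\le n}$ with $z_{i,j}\ge0$, $\sum_{j=0}^n z_{i,j}=\pi^m_i$ for all $i\le m$, and $\sum_{i=0}^m z_{i,j}=\pi^n_j$ for all $j\le n$. *)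

From HB Require Import structures.
From mathcomp Require Import all_boot all_order all_algebra.
From mathcomp Require Import boolp classical_sets reals.
Set Implicit Arguments. Unset Strict Implicit. Unset Printing Implicit Defensive.
Import Order.TTheory GRing.Theory Num.Theory.
Local Open Scope ring_scope.
Local Open Scope classical_set_scope.

Definition is_prob_seq (R : realType) (pi : nat -> nat -> R) : Prop :=
  (forall n i, 0 <= pi n i) /\
  (forall n i, (n < i)%N -> pi n i = 0) /\
  (forall n, \sum_(i < n.+1) pi n i = 1) /\
  (forall m n, m <> n -> pi m <> pi n).

Definition transport_plan (R : realType) (pi : nat -> nat -> R) (m n : nat)
    (z : 'M[R]_(m.+1, n.+1)) : Prop :=
  (forall i j, 0 <= z i j) /\
  (forall i : 'I_m.+1, \sum_(j < n.+1) z i j = pi m i) /\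
  (forall j : 'I_n.+1, \sum_(i < m.+1) z i j = pi n j).

(* Shifted indices: [dfuel pi k a b] computes d_{a-1,b-1} given enough fuel k
   (k > a + b suffices).  The minimum over the (nonempty, compact) set of
   transport plans is written as an infimum; it is attained. *)
Fixpoint dfuel (R : realType) (pi : nat -> nat -> R) (k : nat) : nat -> nat -> R :=
  match k with
  | 0 => fun _ _ => 0
  | k'.+1 => fun a b =>
      match a, b with
      | 0, 0 => 0
      | 0, _.+1 => 1
      | _.+1, 0 => 1
      | m.+1, n.+1 =>
          inf [set c | exists z : 'M[R]_(m.+1, n.+1),
                 @transport_plan R pi m n z /\
                 c = \sum_(i < m.+1) \sum_(j < n.+1) z i j * dfuel pi k' i j]
      end
  end.

Definition dist (R : realType) (pi : nat -> nat -> R) (x y : int) : R :=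
  let a := absz (x + 1) in let b := absz (y + 1) in
  dfuel pi (a + b).+1 a b.

From HB Require Import structures.
From mathcomp Require Import all_boot all_order all_algebra.
From mathcomp Require Import boolp classical_sets reals.
From mathcomp Require Import zify.
Import Order.TTheory GRing.Theory Num.Theory.
Local Open Scope ring_scope.
Local Open Scope classical_set_scope.

Set Implicit Arguments. Unset Strict Implicit.

(* Proof idea: d_{m,n} is the optimal transport cost from pi^m to pi^n for the
   ground cost d on strictly smaller indices, so every metric axiom follows by
   strong induction on the indices, as for Wasserstein distances.  The
   diagonal plan gives d_{m,m} = 0, transposing plans gives symmetry, and
   gluing a plan from pi^m to pi^n with one from pi^n to pi^p along the common
   marginal pi^n gives the triangle inequality.  For m <> n the off-diagonal
   costs are bounded below by some d > 0, while every plan must move at least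
   pi^m_i - pi^n_i of mass off the diagonal in row i; choosing i with
   pi^m_i > pi^n_i (which exists since pi^m <> pi^n, up to symmetry) gives
   d_{m,n} >= d (pi^m_i - pi^n_i) > 0. *)

Lemma exists_pos_lbound (R : realDomainType) (I : finType) (P : pred I) (f : I -> R) :
  (forall i, P i -> 0 < f i) -> exists2 d, 0 < d & forall i, P i -> d <= f i.
Proof.
move=> f_gt0; exists (\big[Num.min/1]_(i | P i) f i).
  elim/big_ind: _ => [|x y x_gt0 y_gt0|i /f_gt0//]; first exact: ltr01.
  by rewrite lt_min x_gt0.
by move=> i Pi; rewrite (bigD1 i) //= ge_min lexx.
Qed.

Section TransportPlans.
Variables (R : realType) (pi : nat -> nat -> R).

Definition plan_cost (c : nat -> nat -> R) m n (z : 'M[R]_(m.+1, n.+1)) : R :=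
  \sum_(i < m.+1) \sum_(j < n.+1) z i j * c i j.

Definition offdiag_mass m n (z : 'M[R]_(m.+1, n.+1)) (i : 'I_m.+1) : R :=
  \sum_(j < n.+1 | (j : nat) != i) z i j.

Section OnePlan.
Variables (m n : nat) (z : 'M[R]_(m.+1, n.+1)).
Hypothesis zP : transport_plan pi z.

Lemma plan_entry_le_row i j : z i j <= pi m i.
Proof.
by case: zP => z_ge0 [<- _]; rewrite (bigD1 j) //= lerDl sumr_ge0.
Qed.

Lemma plan_entry_le_col i j : z i j <= pi n j.
Proof.
by case: zP => z_ge0 [_ <-]; rewrite (bigD1 i) //= lerDl sumr_ge0.
Qed.

Lemma plan_entry_row_eq0 (i : 'I_m.+1) j : pi m i = 0 -> z i j = 0.
Proof.
by case: zP => z_ge0 _ pi_i0; apply/le_anti; rewrite z_ge0 -pi_i0 plan_entry_le_row.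
Qed.

Lemma plan_entry_col_eq0 i (j : 'I_n.+1) : pi n j = 0 -> z i j = 0.
Proof.
by case: zP => z_ge0 _ pi_j0; apply/le_anti; rewrite z_ge0 -pi_j0 plan_entry_le_col.
Qed.

Lemma transport_plan_tr : transport_plan pi z^T.
Proof.
case: zP => z_ge0 [zrow zcol]; split; [|split] => [i j|i|j]; rewrite ?mxE //.
- by under eq_bigr do rewrite mxE.
- by under eq_bigr do rewrite mxE.
Qed.

Lemma plan_cost_ge0 (c : nat -> nat -> R) :
  (forall (i : 'I_m.+1) (j : 'I_n.+1), 0 <= c i j) -> 0 <= plan_cost c z.
Proof.
case: zP => z_ge0 _ c_ge0.
by apply: sumr_ge0 => i _; apply: sumr_ge0 => j _; rewrite mulr_ge0.
Qed.

Lemma plan_cost_ge_offdiag_mass (c : nat -> nat -> R) d i0 :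
  (forall (i : 'I_m.+1) (j : 'I_n.+1), 0 <= c i j) ->
  (forall (i : 'I_m.+1) (j : 'I_n.+1), (i : nat) != j -> d <= c i j) ->
  d * offdiag_mass z i0 <= plan_cost c z.
Proof.
case: zP => z_ge0 _ c_ge0 c_ge_d.
have term_ge0 i j : 0 <= z i j * c i j by rewrite mulr_ge0.
rewrite /plan_cost (bigD1 i0) //= (bigID (fun j : 'I_n.+1 => (j : nat) != i0)) /=.
rewrite -addrA ler_wpDr ?addr_ge0 ?sumr_ge0 // => [i _|].
  exact: sumr_ge0.
rewrite /offdiag_mass mulr_sumr; apply: ler_sum => j j_off.
by rewrite mulrC ler_wpM2l ?c_ge_d // eq_sym.
Qed.

End OnePlan.

Lemma plan_cost_tr (c : nat -> nat -> R) m n (z : 'M[R]_(m.+1, n.+1)) :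
  plan_cost c z^T = plan_cost (fun i j => c j i) z.
Proof.
rewrite /plan_cost exchange_big /=.
by apply: eq_bigr => j _; apply: eq_bigr => i _; rewrite mxE.
Qed.

Section Gluing.
Variables (m n p : nat) (z1 : 'M[R]_(m.+1, n.+1)) (z2 : 'M[R]_(n.+1, p.+1)).
Hypotheses (z1P : transport_plan pi z1) (z2P : transport_plan pi z2).

(* The conditional coupling of [z1] and [z2] given the middle index [j];
   when [pi n j = 0] the whole column [z1 _ j] and row [z2 j _] vanish, so
   the junk value [x / 0 = 0] is harmless. *)
Definition glue_weight i j k : R := z1 i j * z2 j k / pi n j.

Definition glue : 'M[R]_(m.+1, p.+1) := \matrix_(i, k) \sum_j glue_weight i j k.

Lemma glue_weight_ge0 i j k : 0 <= glue_weight i j k.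
Proof.
case: z1P z2P => [z1_ge0 [_ z1col]] [z2_ge0 _].
by rewrite !mulr_ge0 // invr_ge0 -z1col sumr_ge0.
Qed.

Lemma sum_glue_weight_last i j : \sum_k glue_weight i j k = z1 i j.
Proof.
case: z2P => _ [z2row _]; rewrite /glue_weight -mulr_suml -mulr_sumr z2row.
have [pi_j0|pi_j_neq0] := eqVneq (pi n j) 0; last by rewrite mulfK.
by rewrite plan_entry_col_eq0 // !mul0r.
Qed.

Lemma sum_glue_weight_first j k : \sum_i glue_weight i j k = z2 j k.
Proof.
case: z1P => _ [_ z1col]; rewrite /glue_weight -!mulr_suml z1col.
have [pi_j0|pi_j_neq0] := eqVneq (pi n j) 0; last by rewrite mulrAC mulfV ?mul1r.
by rewrite plan_entry_row_eq0 // mulr0 mul0r.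
Qed.

Lemma transport_plan_glue : transport_plan pi glue.
Proof.
case: z1P z2P => [_ [z1row _]] [_ [_ z2col]].
split; [|split] => [i k|i|k].
- by rewrite mxE sumr_ge0 // => j _; apply: glue_weight_ge0.
- under eq_bigr do rewrite mxE; rewrite exchange_big /=.
  by under eq_bigr do rewrite sum_glue_weight_last; rewrite z1row.
- under eq_bigr do rewrite mxE; rewrite exchange_big /=.
  by under eq_bigr do rewrite sum_glue_weight_first; rewrite z2col.
Qed.

Lemma plan_cost_glue_le (c : nat -> nat -> R) :
  (forall (i : 'I_m.+1) (j : 'I_n.+1) (k : 'I_p.+1), c i k <= c i j + c j k) ->
  plan_cost c glue <= plan_cost c z1 + plan_cost c z2.
Proof.
move=> c_tri.
have cost_z1 : plan_cost c z1 = \sum_i \sum_k \sum_j glue_weight i j k * c i j.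
  apply: eq_bigr => i _; rewrite exchange_big; apply: eq_bigr => j _.
  by rewrite -mulr_suml sum_glue_weight_last.
have cost_z2 : plan_cost c z2 = \sum_i \sum_k \sum_j glue_weight i j k * c j k.
  rewrite exchange_big; under [RHS]eq_bigr do rewrite exchange_big.
  rewrite exchange_big; apply: eq_bigr => j _; apply: eq_bigr => k _.
  by rewrite -mulr_suml sum_glue_weight_first.
rewrite cost_z1 cost_z2 -big_split; apply: ler_sum => i _.
rewrite -big_split; apply: ler_sum => k _.
rewrite mxE mulr_suml -big_split; apply: ler_sum => j _.
by rewrite /= -mulrDr ler_wpM2l ?glue_weight_ge0.
Qed.

End Gluing.

Hypothesis pi_prob : is_prob_seq pi.

Lemma pi_ge0 n i : 0 <= pi n i.
Proof. by case: pi_prob. Qed.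

Lemma sum_pi n : \sum_(i < n.+1) pi n i = 1.
Proof. by case: pi_prob => _ [_ []]. Qed.

Definition prod_plan m n : 'M[R]_(m.+1, n.+1) := \matrix_(i, j) (pi m i * pi n j).

Lemma transport_plan_prod m n : transport_plan pi (prod_plan m n).
Proof.
split; [|split] => [i j|i|j]; rewrite ?mxE ?mulr_ge0 ?pi_ge0 //.
- by under eq_bigr do rewrite mxE; rewrite -mulr_sumr sum_pi mulr1.
- by under eq_bigr do rewrite mxE; rewrite -mulr_suml sum_pi mul1r.
Qed.

Definition diag_plan m : 'M[R]_(m.+1, m.+1) :=
  \matrix_(i, j) if i == j then pi m i else 0.

Lemma diag_plan_row m (i : 'I_m.+1) (F : 'I_m.+1 -> R) :
  \sum_j diag_plan m i j * F j = pi m i * F i.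
Proof.
under eq_bigr do rewrite mxE (fun_if (fun x => x * F _)) mul0r.
by rewrite -big_mkcond /= (big_pred1 i) // => j; rewrite eq_sym.
Qed.

Lemma transport_plan_diag m : transport_plan pi (diag_plan m).
Proof.
split; [|split] => [i j|i|j].
- by rewrite mxE; case: eqP; rewrite ?pi_ge0.
- by under eq_bigr do rewrite -[diag_plan m i _]mulr1; rewrite diag_plan_row mulr1.
- under eq_bigr do rewrite mxE.
  by rewrite -big_mkcond /= (big_pred1 j).
Qed.

Lemma plan_cost_diag (c : nat -> nat -> R) m :
  plan_cost c (diag_plan m) = \sum_(i < m.+1) pi m i * c i i.
Proof. by apply: eq_bigr => i _; rewrite diag_plan_row. Qed.

Lemma plan_cost_le1 (c : nat -> nat -> R) m n (z : 'M[R]_(m.+1, n.+1)) :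
  transport_plan pi z -> (forall (i : 'I_m.+1) (j : 'I_n.+1), c i j <= 1) ->
  plan_cost c z <= 1.
Proof.
case=> z_ge0 [zrow _] c_le1; rewrite -(sum_pi m).
apply: ler_sum => i _; rewrite -zrow; apply: ler_sum => j _.
by rewrite ler_piMr.
Qed.

Lemma offdiag_mass_ge m n (z : 'M[R]_(m.+1, n.+1)) (i : 'I_m.+1) :
  transport_plan pi z -> pi m i - pi n i <= offdiag_mass z i.
Proof.
move=> zP; case: (zP) => _ [zrow _].
rewrite lerBlDl -[X in X <= _]zrow (bigID (fun j : 'I_n.+1 => (j : nat) == i)) /=.
rewrite lerD2r; apply: le_trans (_ : \sum_(j < n.+1 | (j : nat) == i) pi n j <= _).
  by apply: ler_sum => j _; apply: plan_entry_le_col.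
by rewrite -(big_mkord (fun j => j == i) (pi n)) big_nat1_eq; case: ifP; rewrite ?pi_ge0.
Qed.

End TransportPlans.

Section Distance.
Variables (R : realType) (pi : nat -> nat -> R).

Lemma dfuel_indep k k' a b :
  (a + b < k)%N -> (a + b < k')%N -> dfuel pi k a b = dfuel pi k' a b.
Proof.
elim: k k' a b => [|k IH] [|k'] // [|m] [|n] // ltk ltk' /=.
congr inf; apply/seteqP; split => _ [z [zP ->]]; exists z; split => //;
  apply: eq_bigr => i _; apply: eq_bigr => j _; rewrite (IH k') //;
  by have := ltn_ord i; have := ltn_ord j; lia.
Qed.

(* [dnat a b] is d_{a-1,b-1}. *)
Definition dnat a b : R := dfuel pi (a + b).+1 a b.

Definition plan_costs m n := [set plan_cost dnat z | z in @transport_plan R pi m n].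

Lemma dnat00 : dnat 0 0 = 0. Proof. by []. Qed.
Lemma dnat0S n : dnat 0 n.+1 = 1. Proof. by []. Qed.
Lemma dnatS0 m : dnat m.+1 0 = 1. Proof. by []. Qed.

Lemma dnatSS m n : dnat m.+1 n.+1 = inf (plan_costs m n).
Proof.
have costE (z : 'M[R]_(m.+1, n.+1)) :
    \sum_i \sum_j z i j * dfuel pi (m.+1 + n.+1) i j = plan_cost dnat z.
  apply: eq_bigr => i _; apply: eq_bigr => j _; rewrite /dnat (dfuel_indep _ (ltnSn _)) //.
  by have := ltn_ord i; have := ltn_ord j; lia.
congr inf; apply/seteqP; split => [_ [z [zP ->]]|_ [z zP <-]].
- by exists z; rewrite ?costE.
- by exists z; rewrite costE.
Qed.

Hypothesis pi_prob : is_prob_seq pi.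

Lemma plan_costs_neq0 m n : plan_costs m n !=set0.
Proof.
by exists (plan_cost dnat (prod_plan pi m n)), (prod_plan pi m n); first exact: transport_plan_prod.
Qed.

Lemma dnat_ge0_le1 a b : 0 <= dnat a b <= 1.
Proof.
have [N] := ubnP (a + b); elim: N a b => // N IH [|m] [|n] ltN;
  rewrite ?dnat00 ?dnat0S ?dnatS0 ?lexx ?ler01 //.
have IHij (i : 'I_m.+1) (j : 'I_n.+1) : 0 <= dnat i j <= 1.
  by apply: IH; have := ltn_ord i; have := ltn_ord j; lia.
have cost01 (z : 'M[R]_(m.+1, n.+1)) :
    transport_plan pi z -> 0 <= plan_cost dnat z <= 1.
  move=> zP; apply/andP; split;
    [apply: (plan_cost_ge0 zP) | apply: (plan_cost_le1 pi_prob zP)];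
    by move=> i j; case/andP: (IHij i j).
have lbound0 : lbound (plan_costs m n) 0.
  by move=> _ [z zP <-]; case/andP: (cost01 z zP).
have prodP := transport_plan_prod pi_prob m n.
rewrite dnatSS lb_le_inf //=; last exact: plan_costs_neq0.
apply: le_trans (ge_inf _ _) _; [by exists 0 | by exists (prod_plan pi m n) |].
by case/andP: (cost01 _ prodP).
Qed.

Lemma dnat_ge0 a b : 0 <= dnat a b.
Proof. by case/andP: (dnat_ge0_le1 a b). Qed.

Lemma dnat_le1 a b : dnat a b <= 1.
Proof. by case/andP: (dnat_ge0_le1 a b). Qed.

Lemma dnatSS_le_plan_cost m n (z : 'M[R]_(m.+1, n.+1)) :
  transport_plan pi z -> dnat m.+1 n.+1 <= plan_cost dnat z.
Proof.
move=> zP; rewrite dnatSS ge_inf //; last by exists z.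
by exists 0 => _ [z' z'P <-]; apply: (plan_cost_ge0 z'P) => i j; apply: dnat_ge0.
Qed.

Lemma dnatSS_ge_lbound m n x :
  (forall z : 'M[R]_(m.+1, n.+1), transport_plan pi z -> x <= plan_cost dnat z) ->
  x <= dnat m.+1 n.+1.
Proof.
move=> x_le; rewrite dnatSS; apply: lb_le_inf; first exact: plan_costs_neq0.
by move=> _ [z zP <-]; apply: x_le.
Qed.

Lemma dnatxx a : dnat a a = 0.
Proof.
elim/ltn_ind: a => [[//|m] IH]; apply/le_anti; rewrite dnat_ge0 andbT.
apply: le_trans (dnatSS_le_plan_cost (transport_plan_diag pi_prob m)) _.
by rewrite plan_cost_diag big1 // => i _; rewrite IH ?mulr0.
Qed.

Lemma dnatC a b : dnat a b = dnat b a.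
Proof.
have [N] := ubnP (a + b); elim: N a b => // N IH [|m] [|n] // ltN.
suff dnat_le_swap m' n' : (m' + n' = m + n)%N -> dnat m'.+1 n'.+1 <= dnat n'.+1 m'.+1.
  by apply/le_anti; rewrite !dnat_le_swap // addnC.
move=> eq_mn; apply: dnatSS_ge_lbound => z zP.
have -> : plan_cost dnat z = plan_cost (fun i j => dnat j i) z.
  apply: eq_bigr => i _; apply: eq_bigr => j _.
  by rewrite IH //; have := ltn_ord i; have := ltn_ord j; lia.
by rewrite -plan_cost_tr; apply/dnatSS_le_plan_cost/transport_plan_tr.
Qed.

Lemma dnatSS_gt0_of_gap m n d i0 : 0 < d ->
  (forall (i : 'I_m.+1) (j : 'I_n.+1), (i : nat) != j -> d <= dnat i j) ->
  pi n i0 < pi m i0 -> 0 < dnat m.+1 n.+1.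
Proof.
move=> d_gt0 d_le lt_i0.
have lt_i0m : (i0 < m.+1)%N.
  rewrite ltnNge; apply/negP => le_mi0; case: pi_prob => _ [pi_supp _].
  by move: lt_i0; rewrite (pi_supp m) // ltNge pi_ge0.
apply: (@lt_le_trans _ _ (d * (pi m i0 - pi n i0))); first by rewrite mulr_gt0 ?subr_gt0.
apply: dnatSS_ge_lbound => z zP.
pose i : 'I_m.+1 := Ordinal lt_i0m.
apply: le_trans (ler_wpM2l (ltW d_gt0) (offdiag_mass_ge pi_prob i zP)) _.
exact: (plan_cost_ge_offdiag_mass (c := dnat) zP i (fun a b => dnat_ge0 a b) d_le).
Qed.

Lemma dnat_gt0 a b : a != b -> 0 < dnat a b.
Proof.
have [N] := ubnP (a + b); elim: N a b => // N IH [|m] [|n] // ltN neq_mn;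
  rewrite ?dnat0S ?dnatS0 ?ltr01 //.
have [i0 neq_i0] : exists i0, pi m i0 <> pi n i0.
  apply/existsNP => eq_pi; case: pi_prob => _ [_ [_ pi_inj]].
  by apply: (pi_inj m n); [apply/eqP | apply: funext].
wlog lt_i0 : m n ltN neq_mn neq_i0 / pi n i0 < pi m i0.
  move=> lt_case; case: (ltgtP (pi n i0) (pi m i0)) => [|lt_mn|eq_mn]; first exact: lt_case.
  - by rewrite dnatC lt_case //; [rewrite addnC | rewrite eq_sym | move/esym].
  - by rewrite eq_mn in neq_i0.
have [d d_gt0 d_le] : exists2 d, 0 < d &
    forall (i : 'I_m.+1) (j : 'I_n.+1), (i : nat) != j -> d <= dnat i j.
  have [|d d_gt0 d_le] := @exists_pos_lbound _ _
    (fun ij : 'I_m.+1 * 'I_n.+1 => (ij.1 : nat) != ij.2) (fun ij => dnat ij.1 ij.2).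
  - case=> i j /= neq_ij; apply: IH neq_ij.
    by have := ltn_ord i; have := ltn_ord j; lia.
  - by exists d => // i j /(d_le (i, j)).
exact: dnatSS_gt0_of_gap d_gt0 d_le lt_i0.
Qed.

Lemma dnat_eq0 a b : (dnat a b == 0) = (a == b).
Proof.
by have [->|/dnat_gt0] := eqVneq a b; [rewrite dnatxx eqxx | rewrite lt0r => /andP[/negbTE]].
Qed.

Lemma dnat_triangle a b c : dnat a c <= dnat a b + dnat b c.
Proof.
have [N] := ubnP (a + b + c); elim: N a b c => // N IH [|m] [|n] [|p] ltN;
  rewrite ?dnat00 ?dnat0S ?dnatS0 ?add0r ?addr0 ?lexx ?addr_ge0 ?dnat_ge0 //.
- by rewrite lerDl dnat_ge0.
- by rewrite (le_trans (dnat_le1 _ _)) // lerDl ler01.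
- by rewrite lerDr dnat_ge0.
rewrite -lerBlDl; apply: dnatSS_ge_lbound => z2 z2P.
rewrite lerBlDl -lerBlDr; apply: dnatSS_ge_lbound => z1 z1P.
rewrite lerBlDr (le_trans (dnatSS_le_plan_cost (transport_plan_glue z1P z2P))) //.
apply: plan_cost_glue_le => // i j k; apply: IH.
by have := ltn_ord i; have := ltn_ord j; have := ltn_ord k; lia.
Qed.

End Distance.

Theorem theorem2 (R : realType) (pi : nat -> nat -> R) :
  is_prob_seq pi ->
  (forall x y : int, -1 <= x -> -1 <= y -> 0 <= dist pi x y) /\
  (forall x y : int, -1 <= x -> -1 <= y -> (dist pi x y = 0 <-> x = y)) /\
  (forall x y : int, -1 <= x -> -1 <= y -> dist pi x y = dist pi y x) /\
  (forall x y z : int, -1 <= x -> -1 <= y -> -1 <= z ->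
     dist pi x z <= dist pi x y + dist pi y z).
Proof.
move=> pi_prob.
have distE x y : dist pi x y = dnat pi (absz (x + 1)) (absz (y + 1)) by [].
split; [|split; [|split]] => [x y _ _|x y x_ge y_ge|x y _ _|x y z _ _ _]; rewrite !distE.
- exact: dnat_ge0.
- by split=> [/eqP|->]; rewrite ?(dnatxx pi_prob) // (dnat_eq0 pi_prob) => /eqP; lia.
- exact: dnatC.
- exact: dnat_triangle.
Qed.
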